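(* Let $k\ge1$ and let $s_1,s_2\ge0$ be integers with $s_1+s_2\le k$. The determinant of the Gram matrix $G^k_{2s_1+s_2}$ (defined in the context) is a nonzero polynomial in $\mathbb{Z}[x]$ with leading coefficient $1$.
   Context: Let $\mathbb{Z}_2=\{e,g\}$ act on $X=([k]\cup[k'])\times\mathbb{Z}_2$ by $h\cdot(i,a)=(i,ha)$, where $[k]=\{1,\dots,k\}$, $[k']=\{1',\dots,k'\}$. A set partition of a $\mathbb{Z}_2$-stable set is $\mathbb{Z}_2$-stable if $g$ maps blocks to blocks. Identifying $(i,e)\mapsto 2i-1$, $(i,g)\mapsto 2i$ (and similarly for primed vertices), a $\mathbb{Z}_2$-stable set partition of $X$ is a $2k$-partition diagram (top row $[k]\times\mathbb{Z}_2$, bottom row $[k']\times\mathbb{Z}_2$). For partition diagrams: a block meeting both rows is a through class, the propagating number $\sharp^p(d)$ is the number of through classes; the product of $d_1,d_2$ is obtained by placing $d_1$ above $d_2$, identifying bottom vertices of $d_1$ with top vertices of $d_2$, taking the induced partition $d_3$ of the outer rows, and $l(d_1,d_2)$ is the number of connected components lying entirely in the middle row; $\sharp^p(d_1d_2)$ means $\sharp^p(d_3)$. Index set: a block $B$ of a $\mathbb{Z}_2$-stable partition $\pi$ of $[k]\times\mathbb{Z}_2$ is a $\mathbb{Z}_2$-block if $gB=B$ and an $\{e\}$-block otherwise (then $gB\neq B$ is also a block). $J^{2k}_{2s_1+s_2}$ is the set of pairs $D=(\pi,T)$ with $\pi$ a $\mathbb{Z}_2$-stable partition of $[k]\times\mathbb{Z}_2$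 and $T$ a $g$-stable set of blocks of $\pi$ consisting of $s_1$ pairs $\{B,gB\}$ of $\{e\}$-blocks and $s_2$ $\mathbb{Z}_2$-blocks. The diagram $d_D$ has blocks $B\cup B'$ for $B\in T$, and $B$, $B'$ separately for $B\in\pi\setminus T$, where $B'=\{(i',a):(i,a)\in B\}$. The Gram matrix $G^k_{2s_1+s_2}$ has rows and columns indexed by $J^{2k}_{2s_1+s_2}$, with $(D,E)$ entry $x^{l(d_D,d_E)}$ if $\sharp^p(d_Dd_E)=2s_1+s_2$ and $0$ otherwise. *)

From HB Require Import structures.
From mathcomp Require Import all_boot all_order all_algebra.
Set Implicit Arguments. Unset Strict Implicit. Unset Printing Implicit Defensive.
Import GRing.Theory.
Local Open Scope ring_scope.

(* The Z_2-set [k] x Z_2 : (i, false) = (i,e), (i, true) = (i,g). *)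
Definition V (k : nat) : finType := ('I_k * bool)%type.

Definition gset k (B : {set V k}) : {set V k} := [set (v.1, ~~ v.2) | v in B].

Definition Z2_stable_partition k (P : {set {set V k}}) : bool :=
  partition P [set: V k] && [forall B in P, gset B \in P].

Definition Jset (k s1 s2 : nat) : {set ({set {set V k}} * {set {set V k}})} :=
  [set D : {set {set V k}} * {set {set V k}} | [&& Z2_stable_partition D.1,
              D.2 \subset D.1,
              [forall B in D.2, gset B \in D.2],
              #|[set B in D.2 | gset B == B]| == s2 &
              #|[set B in D.2 | gset B != B]| == (2 * s1)%N]].

(* Partition diagrams on top row V k (tag false) and bottom row V k (tag true). *)
Definition diagram k := {set {set (V k * bool)}}.

Definition lift_top k (B : {set V k}) : {set V k * bool} := [set (v, false) | v in B].
Definition lift_bot k (B : {set V k}) : {set V k * bool} := [set (v, true) | v in B].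

Definition d_of k (D : {set {set V k}} * {set {set V k}}) : diagram k :=
  [set lift_top B :|: lift_bot B | B in D.2]
  :|: [set lift_top B | B in D.1 :\: D.2]
  :|: [set lift_bot B | B in D.1 :\: D.2].

Definition prop_num k (d : diagram k) : nat :=
  #|[set B in d | [exists v, (v, false) \in B] && [exists v, (v, true) \in B]]|.

(* Stacking d1 above d2: three rows V k * 'I_3 (0 = top of d1, 1 = middle,
   2 = bottom of d2).  Two vertices are adjacent if they lie in a common block
   of d1 (rows 0,1) or of d2 (rows 1,2). *)
Definition stack_rel k (d1 d2 : diagram k) : rel (V k * 'I_3) :=
  fun x y =>
    [&& (x.2 <= 1)%N, (y.2 <= 1)%N &
        [exists B in d1, ((x.1, x.2 == 1%N :> nat) \in B) &&
                         ((y.1, y.2 == 1%N :> nat) \in B)]]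
    || [&& (1 <= x.2)%N, (1 <= y.2)%N &
        [exists B in d2, ((x.1, x.2 == 2%N :> nat) \in B) &&
                         ((y.1, y.2 == 2%N :> nat) \in B)]].

Definition stack_comps k (d1 d2 : diagram k) : {set {set (V k * 'I_3)}} :=
  [set [set y | connect (stack_rel d1 d2) x y] | x : V k * 'I_3].

Definition diag_prod k (d1 d2 : diagram k) : diagram k :=
  [set [set p : V k * bool |
         [exists w : V k * 'I_3, (w \in C) && (w.1 == p.1) && (w.2 == (if p.2 then 2 else 0)%N :> nat)]]
   | C : {set (V k * 'I_3)} in stack_comps d1 d2] :\ set0.

Definition l_mid k (d1 d2 : diagram k) : nat :=
  #|[set C in stack_comps d1 d2 | [forall w in C, w.2 == 1%N :> nat]]|.

Definition Gram (k s1 s2 : nat) : 'M[{poly int}]_(#|Jset k s1 s2|) :=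
  \matrix_(i, j)
    let dD := d_of (enum_val i) in
    let dE := d_of (enum_val j) in
    if prop_num (diag_prod dD dE) == (2 * s1 + s2)%N then 'X ^+ (l_mid dD dE) else 0.

(* Write D = (pi, T) and w(D) for the number of unmarked blocks, those of pi
   not in T.  Every entry of the Gram matrix is 0 or x^l(D,E), and the
   diagonal one is x^w(D).  Stack d_D over d_E: the middle rows of the
   components that stay in the middle row are pairwise disjoint unions of
   unmarked blocks of D and also of E, so l(D,E) <= min(w(D), w(E)).  If both
   bounds are attained, these middle rows are exactly the unmarked blocks of
   either partition; the middle rows of the through classes are then unions of
   marked blocks of both, and if there are |T_D| = |T_E| through classes they
   are exactly the marked blocks of either, whence D = E.  So off the diagonal
   every nonzero entry has 2 l(D,E) < w(D) + w(E), and in the Leibniz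
   expansion only the identity permutation reaches degree sum_D w(D). *)

From HB Require Import structures.
From mathcomp Require Import all_boot all_order all_algebra fingroup perm zify.
Set Implicit Arguments. Unset Strict Implicit. Unset Printing Implicit Defensive.
Import GRing.Theory.

Section DisjointUnions.
Variables (T : finType) (Q S : {set {set T}}).
Hypotheses (trivS : trivIset S) (S0 : set0 \notin S).
Hypothesis S_unions : forall s x, s \in S -> x \in s ->
  exists2 B, B \in Q & (x \in B) && (B \subset s).

Let S_meet s s' x : s \in S -> s' \in S -> x \in s -> x \in s' -> s = s'.
Proof. by move=> sS s'S xs xs'; rewrite -(def_pblock trivS sS xs) (def_pblock trivS s'S xs'). Qed.

Let inner (s : {set T}) := odflt set0 [pick B in Q | (B != set0) && (B \subset s)].

Let innerP s : s \in S -> [/\ inner s \in Q, inner s != set0 & inner s \subset s].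
Proof.
move=> sS; have /set0Pn[x xs] : s != set0 by apply: contraNneq S0 => <-.
rewrite /inner; case: pickP => [B /and3P[] // | noB].
have [B BQ /andP[xB Bs]] := S_unions sS xs.
have B0 : B != set0 by apply/set0Pn; exists x.
by move: (noB B) => /=; rewrite BQ B0 Bs.
Qed.

Let inner_inj : {in S &, injective inner}.
Proof.
move=> s s' sS s'S eq_ss'; have [_ /set0Pn[x xB] Bs] := innerP sS.
have [_ _ Bs'] := innerP s'S.
by apply: (S_meet sS s'S (subsetP Bs x xB)); apply: (subsetP Bs'); rewrite -eq_ss'.
Qed.

Let inner_sub : inner @: S \subset Q.
Proof. by apply/subsetP => _ /imsetP[s sS ->]; case: (innerP sS). Qed.

Lemma leq_card_disjoint_unions : #|S| <= #|Q|.
Proof. by rewrite -(card_in_imset inner_inj) subset_leq_card. Qed.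

Lemma disjoint_unions_eq : #|Q| <= #|S| -> S = Q.
Proof.
move=> leQS; have innerS : inner @: S = Q.
  by apply/eqP; rewrite eqEcard inner_sub (card_in_imset inner_inj).
rewrite -innerS -[LHS]imset_id; apply: eq_in_imset => s sS /=.
have [_ _ sub_s] := innerP sS; apply/eqP; rewrite eqEsubset sub_s andbT.
apply/subsetP => x xs; have [B BQ /andP[xB Bs]] := S_unions sS xs.
rewrite -innerS in BQ; case/imsetP: BQ => s' s'S eB.
have [_ _ sub_s'] := innerP s'S.
have xs' : x \in s' by apply: (subsetP sub_s'); rewrite -eB.
by rewrite -(S_meet s'S sS xs' xs) -eB.
Qed.

End DisjointUnions.

Definition marked_partition k (D : {set {set V k}} * {set {set V k}}) :=
  partition D.1 [set: V k] && (D.2 \subset D.1).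

Section MarkedPartition.
Variables (k : nat) (D : {set {set V k}} * {set {set V k}}).
Hypothesis markedD : marked_partition D.

Lemma marked_partition_triv : trivIset D.1.
Proof. by case/andP: markedD => /and3P[]. Qed.

Lemma marked_partition_cover (v : V k) : v \in cover D.1.
Proof. by case/andP: markedD => /and3P[/eqP -> _ _] _; rewrite inE. Qed.

Lemma marked_block_neq0 B : B \in D.1 -> B != set0.
Proof. by case/andP: markedD => /and3P[_ _ D0] _ BD; apply: contraNneq D0 => <-. Qed.

Lemma mem_pblock_marked (v : V k) : v \in pblock D.1 v.
Proof. by rewrite mem_pblock marked_partition_cover. Qed.

Lemma pblock_mem_marked (v : V k) : pblock D.1 v \in D.1.
Proof. exact/pblock_mem/marked_partition_cover. Qed.

Lemma def_pblock_marked B (v : V k) : B \in D.1 -> v \in B -> pblock D.1 v = B.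
Proof. exact: def_pblock marked_partition_triv. Qed.

Lemma eq_pblock_marked B (v : V k) : B \in D.1 -> v \in B ->
  forall w, (pblock D.1 v == pblock D.1 w) = (w \in B).
Proof.
move=> BD vB w; rewrite eq_pblock ?marked_partition_cover ?marked_partition_triv //.
by rewrite (def_pblock_marked BD vB).
Qed.

Lemma mem_lift_top (B : {set V k}) v b : ((v, b) \in lift_top B) = ~~ b && (v \in B).
Proof.
apply/imsetP/andP => [[u uB [-> ->]] // | [nb vB]]; exists v => //.
by case: b nb.
Qed.

Lemma mem_lift_bot (B : {set V k}) v b : ((v, b) \in lift_bot B) = b && (v \in B).
Proof.
apply/imsetP/andP => [[u uB [-> ->]] // | [nb vB]]; exists v => //.
by case: b nb.
Qed.

Lemma d_of_edge (v w : V k) b b' :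
  [exists X in d_of D, ((v, b) \in X) && ((w, b') \in X)] =
  (pblock D.1 v == pblock D.1 w) && ((pblock D.1 v \in D.2) || (b == b')).
Proof.
have [_ subT] := andP markedD.
apply/exists_inP/andP.
- case=> X; rewrite /d_of !inE -!orbA => /or3P[].
  + case/imsetP => B BT ->; have BD := subsetP subT B BT.
    rewrite !inE !mem_lift_top !mem_lift_bot.
    move=> /andP[/orP[/andP[_ vB] | /andP[_ vB]] /orP[/andP[_ wB] | /andP[_ wB]]];
    by rewrite (def_pblock_marked BD vB) (def_pblock_marked BD wB) BT.
  + case/imsetP => B; rewrite inE => /andP[_ BD] ->; rewrite !mem_lift_top.
    case/andP => /andP[/negbTE -> vB] /andP[/negbTE -> wB].
    by rewrite (def_pblock_marked BD vB) (def_pblock_marked BD wB) eqxx orbT.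
  + case/imsetP => B; rewrite inE => /andP[_ BD] ->; rewrite !mem_lift_bot.
    case/andP => /andP[-> vB] /andP[-> wB].
    by rewrite (def_pblock_marked BD vB) (def_pblock_marked BD wB) eqxx orbT.
- move=> [/eqP eq_vw]; set B := pblock D.1 v.
  have vB : v \in B := mem_pblock_marked v.
  have wB : w \in B by rewrite /B eq_vw mem_pblock_marked.
  have BD : B \in D.1 := pblock_mem_marked v.
  have [BT _ | BT /= /eqP <-] := boolP (B \in D.2).
  + exists (lift_top B :|: lift_bot B); last first.
      by rewrite !inE !mem_lift_top !mem_lift_bot vB wB; case: (b) (b') => [] [].
    by rewrite !inE (imset_f (fun B => lift_top B :|: lift_bot B)).
  + case: b.
    * exists (lift_bot B); last by rewrite !mem_lift_bot vB wB.
      by rewrite !inE (imset_f (@lift_bot k)) ?orbT // inE BT.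
    * exists (lift_top B); last by rewrite !mem_lift_top vB wB.
      by rewrite !inE (imset_f (@lift_top k)) ?orbT // inE BT.
Qed.

End MarkedPartition.

Definition row_top : 'I_3 := @Ordinal 3 0 isT.
Definition row_mid : 'I_3 := @Ordinal 3 1 isT.
Definition row_bot : 'I_3 := @Ordinal 3 2 isT.

Section Stacking.
Variables (k : nat) (d1 d2 : diagram k).
Local Notation W := (V k * 'I_3)%type.
Local Notation R := (stack_rel d1 d2).
Local Notation comps := (stack_comps d1 d2).

Lemma stack_rel_sym : symmetric R.
Proof.
have sym_in (d : diagram k) (a b : V k * bool) :
    [exists B in d, (a \in B) && (b \in B)] = [exists B in d, (b \in B) && (a \in B)].
  by apply: eq_existsb => B; rewrite (andbC (a \in B)).
move=> x y; rewrite /stack_rel sym_in (sym_in d2).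
by rewrite (andbCA (x.2 <= 1)%N) (andbCA (1 <= x.2)%N) !andbA.
Qed.

Let connect_sym_R : connect_sym R := sym_connect_sym stack_rel_sym.

Definition stack_comp (x : W) : {set W} := [set y | connect R x y].

Lemma mem_stack_comp x : x \in stack_comp x.
Proof. by rewrite inE connect0. Qed.

Lemma stack_comp_in x : stack_comp x \in comps.
Proof. exact: imset_f. Qed.

Lemma stack_comp_connect C x y : C \in comps -> x \in C -> y \in C -> connect R x y.
Proof.
case/imsetP => z _ ->; rewrite !inE => zx zy.
by apply: connect_trans zy; rewrite connect_sym_R.
Qed.

Lemma stack_comps_eq C1 C2 x :
  C1 \in comps -> C2 \in comps -> x \in C1 -> x \in C2 -> C1 = C2.
Proof.
move=> /imsetP[z1 _ ->] /imsetP[z2 _ ->]; rewrite !inE => z1x z2x.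
have z12 : connect R z1 z2 by apply: connect_trans z1x _; rewrite connect_sym_R.
by apply/setP => y; rewrite !inE (same_connect connect_sym_R z12).
Qed.

Lemma stack_comp_closed C : C \in comps -> closed R C.
Proof.
case/imsetP => z _ -> x y xy; rewrite !inE.
exact: (connect_closed connect_sym_R z xy).
Qed.

Lemma stack_comp_sub_closed (a : {pred W}) C x :
  closed R a -> C \in comps -> x \in C -> x \in a -> {subset C <= a}.
Proof.
move=> cl_a CC xC xa y yC.
by rewrite -(closed_connect cl_a (stack_comp_connect CC xC yC)).
Qed.

Definition slice (r : 'I_3) (C : {set W}) : {set V k} := [set v | (v, r) \in C].

Definition through_comps : {set {set W}} :=
  [set C in comps | (slice row_top C != set0) && (slice row_bot C != set0)].

Definition mid_comps : {set {set W}} :=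
  [set C in comps | [forall w in C, w.2 == 1%N :> nat]].

Definition outer (C : {set W}) : {set V k * bool} :=
  [set p : V k * bool |
    [exists w : W, (w \in C) && (w.1 == p.1) && (w.2 == (if p.2 then 2 else 0)%N :> nat)]].

Lemma mem_outer C v b : ((v, b) \in outer C) = ((v, if b then row_bot else row_top) \in C).
Proof.
rewrite inE /=; apply/existsP/idP => [[w /andP[/andP[wC /eqP <-] /eqP w2]] | vC].
- have -> : (w.1, if b then row_bot else row_top) = w.
    by case: w {wC} w2 => u r /= w2; congr pair; apply: val_inj; case: b w2 => /= ->.
  exact: wC.
- by exists (v, if b then row_bot else row_top); rewrite vC eqxx; case: b {vC}.
Qed.

Lemma outer_row_neq0 C b :
  [exists v, (v, b) \in outer C] = (slice (if b then row_bot else row_top) C != set0).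
Proof.
by apply/existsP/set0Pn => -[v vC]; exists v; move: vC; rewrite mem_outer inE.
Qed.

Lemma prop_num_through : prop_num (diag_prod d1 d2) = #|through_comps|.
Proof.
rewrite /prop_num; have diag_prodE : diag_prod d1 d2 = outer @: comps :\ set0 := erefl.
have -> : [set B in diag_prod d1 d2 |
             [exists v, (v, false) \in B] && [exists v, (v, true) \in B]] = outer @: through_comps.
  apply/setP => B; rewrite inE diag_prodE !inE; apply/andP/imsetP.
  - case=> /andP[_ /imsetP[C CC ->]]; rewrite !outer_row_neq0 => CTB.
    by exists C; rewrite // inE CC.
  - case=> C; rewrite inE => /andP[CC CTB] ->; rewrite !outer_row_neq0 CTB.
    split=> //; rewrite imset_f // andbT; case/andP: CTB => /set0Pn[v vC] _.
    by apply/set0Pn; exists (v, false); rewrite mem_outer; rewrite inE in vC.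
apply: card_in_imset => C1 C2; rewrite !inE => /and3P[C1C /set0Pn[v vC1] _] /andP[C2C _] eq12.
apply: (stack_comps_eq C1C C2C (x := (v, row_top))); first by rewrite inE in vC1.
by rewrite -[_ \in C2](mem_outer C2 v false) -eq12 mem_outer; rewrite inE in vC1.
Qed.

Section Slices.
Variables (r : 'I_3) (F : {set {set W}}) (Q : {set {set V k}}).
Hypotheses (F_comps : F \subset comps) (F_slice_neq0 : forall C, C \in F -> slice r C != set0).
Hypothesis F_unions : forall C v, C \in F -> v \in slice r C ->
  exists2 B, B \in Q & (v \in B) && (B \subset slice r C).

Let slice_meet C1 C2 v :
  C1 \in F -> C2 \in F -> v \in slice r C1 -> v \in slice r C2 -> C1 = C2.
Proof.
move=> /(subsetP F_comps) C1C /(subsetP F_comps) C2C; rewrite !inE.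
exact: stack_comps_eq.
Qed.

Let slice_inj : {in F &, injective (slice r)}.
Proof.
move=> C1 C2 C1F C2F eq12; have /set0Pn[v vC1] := F_slice_neq0 C1F.
by apply: (slice_meet C1F C2F vC1); rewrite -eq12.
Qed.

Let slices_triv : trivIset (slice r @: F).
Proof.
apply/trivIsetP => _ _ /imsetP[C1 C1F ->] /imsetP[C2 C2F ->] neq12.
apply/pred0P => v /=; apply/negbTE/andP => -[v1 v2].
by rewrite (slice_meet C1F C2F v1 v2) eqxx in neq12.
Qed.

Let slices_neq0 : set0 \notin slice r @: F.
Proof. by apply/imsetP => -[C CF /eqP]; rewrite eq_sym (negbTE (F_slice_neq0 CF)). Qed.

Let slices_unions s v : s \in slice r @: F -> v \in s ->
  exists2 B, B \in Q & (v \in B) && (B \subset s).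
Proof. by case/imsetP => C CF ->; apply: F_unions. Qed.

Lemma leq_card_slices : #|F| <= #|Q|.
Proof.
rewrite -(card_in_imset slice_inj).
exact: leq_card_disjoint_unions slices_triv slices_neq0 slices_unions.
Qed.

Lemma slices_eq : #|Q| <= #|F| -> slice r @: F = Q.
Proof.
rewrite -(card_in_imset slice_inj).
exact: disjoint_unions_eq slices_triv slices_neq0 slices_unions.
Qed.

End Slices.

End Stacking.

Section TwoMarkedPartitions.
Variables (k : nat) (D E : {set {set V k}} * {set {set V k}}).
Hypotheses (markedD : marked_partition D) (markedE : marked_partition E).
Local Notation W := (V k * 'I_3)%type.
Local Notation R := (stack_rel (d_of D) (d_of E)).
Local Notation comps := (stack_comps (d_of D) (d_of E)).
Local Notation pD := (pblock D.1).
Local Notation pE := (pblock E.1).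

Let connect_sym_R : connect_sym R := sym_connect_sym (@stack_rel_sym k _ _).

Lemma stack_relE (x y : W) : R x y =
  [&& (x.2 <= 1)%N, (y.2 <= 1)%N, pD x.1 == pD y.1 &
      (pD x.1 \in D.2) || ((x.2 == 1 :> nat) == (y.2 == 1 :> nat))] ||
  [&& (1 <= x.2)%N, (1 <= y.2)%N, pE x.1 == pE y.1 &
      (pE x.1 \in E.2) || ((x.2 == 2 :> nat) == (y.2 == 2 :> nat))].
Proof. by rewrite /stack_rel (d_of_edge markedD) (d_of_edge markedE). Qed.

Lemma top_unmarked_closed : closed R [pred z : W | (z.2 == 0 :> nat) && (pD z.1 \notin D.2)].
Proof.
apply: (intro_closed connect_sym_R) => -[v [[|[|[|//]]] ?]] [w [[|[|[|//]]] ?]];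
  rewrite stack_relE !inE //=.
all: rewrite orbF => /andP[/eqP eq_vw]; rewrite -?eq_vw; by case: (pD v \in D.2).
Qed.

Section UnmarkedBlock.
Variable B : {set V k}.
Hypotheses (BD : B \in D.1) (BE : B \in E.1).

Lemma block_closed : closed R [pred z : W | z.1 \in B].
Proof.
apply: (intro_closed connect_sym_R) => -[v r] [w r'] /= + vB.
rewrite stack_relE /= (eq_pblock_marked markedD BD vB) (eq_pblock_marked markedE BE vB).
by case/orP => /and4P[].
Qed.

Hypotheses (BnD : B \notin D.2) (BnE : B \notin E.2).

Lemma mid_block_closed : closed R [pred z : W | (z.2 == 1 :> nat) && (z.1 \in B)].
Proof.
apply: (intro_closed connect_sym_R) => -[v [[|[|[|//]]] ?]] [w [[|[|[|//]]] ?]];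
  rewrite !inE //= => + vB.
all: rewrite stack_relE /= ?(eq_pblock_marked markedD BD vB) ?(eq_pblock_marked markedE BE vB).
all: rewrite ?(def_pblock_marked markedD BD vB) ?(def_pblock_marked markedE BE vB).
all: rewrite ?(negbTE BnD) ?(negbTE BnE) //=.
all: by case: (w \in B).
Qed.

End UnmarkedBlock.

Lemma stack_comp_top_mid C v : C \in comps -> pD v \in D.2 ->
  ((v, row_top) \in C) = ((v, row_mid) \in C).
Proof. by move=> CC vT; apply: (stack_comp_closed CC); rewrite stack_relE /= eqxx vT. Qed.

Lemma stack_comp_mid_bot C v : C \in comps -> pE v \in E.2 ->
  ((v, row_mid) \in C) = ((v, row_bot) \in C).
Proof. by move=> CC vT; apply: (stack_comp_closed CC); rewrite stack_relE /= eqxx vT ?orbT. Qed.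

Lemma pblockD_sub_slice C v : C \in comps -> v \in slice row_mid C ->
  pD v \subset slice row_mid C.
Proof.
move=> CC vC; apply/subsetP => w wv; rewrite inE in vC *.
suff vw : R (v, row_mid) (w, row_mid) by rewrite inE -(stack_comp_closed CC vw).
by rewrite stack_relE /= (same_pblock (marked_partition_triv markedD) wv) !eqxx ?orbT.
Qed.

Lemma pblockE_sub_slice C v : C \in comps -> v \in slice row_mid C ->
  pE v \subset slice row_mid C.
Proof.
move=> CC vC; apply/subsetP => w wv; rewrite inE in vC *.
suff vw : R (v, row_mid) (w, row_mid) by rewrite inE -(stack_comp_closed CC vw).
by rewrite stack_relE /= (same_pblock (marked_partition_triv markedE) wv) !eqxx ?orbT.
Qed.

Local Notation mids := (mid_comps (d_of D) (d_of E)).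
Local Notation throughs := (through_comps (d_of D) (d_of E)).

Lemma mid_comps_sub : mids \subset comps.
Proof. by apply/subsetP => C; rewrite inE => /andP[]. Qed.

Lemma mid_compP C w : C \in mids -> w \in C -> w = (w.1, row_mid).
Proof.
rewrite inE => /andP[_ /forall_inP midC] /midC.
by case: w => v r /= /eqP r1; congr pair; apply: val_inj.
Qed.

Lemma mid_comp_slice_neq0 C : C \in mids -> slice row_mid C != set0.
Proof.
move=> CM; have /imsetP[x _ eqC] := subsetP mid_comps_sub C CM.
have xC : x \in C by rewrite eqC mem_stack_comp.
by apply/set0Pn; exists x.1; rewrite inE -(mid_compP CM xC).
Qed.

Lemma mid_slices_unionsD C v : C \in mids -> v \in slice row_mid C ->
  exists2 B, B \in D.1 :\: D.2 & (v \in B) && (B \subset slice row_mid C).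
Proof.
move=> CM vC; have CC := subsetP mid_comps_sub C CM.
exists (pD v); last by rewrite mem_pblock_marked // pblockD_sub_slice.
rewrite inE pblock_mem_marked // andbT; apply/negP => vT.
rewrite inE -(stack_comp_top_mid CC vT) in vC.
by have [] := mid_compP CM vC.
Qed.

Lemma mid_slices_unionsE C v : C \in mids -> v \in slice row_mid C ->
  exists2 B, B \in E.1 :\: E.2 & (v \in B) && (B \subset slice row_mid C).
Proof.
move=> CM vC; have CC := subsetP mid_comps_sub C CM.
exists (pE v); last by rewrite mem_pblock_marked // pblockE_sub_slice.
rewrite inE pblock_mem_marked // andbT; apply/negP => vT.
rewrite inE (stack_comp_mid_bot CC vT) in vC.
by have [] := mid_compP CM vC.
Qed.

Lemma leq_l_mid_unmarkedD : l_mid (d_of D) (d_of E) <= #|D.1 :\: D.2|.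
Proof. exact: leq_card_slices mid_comps_sub mid_comp_slice_neq0 mid_slices_unionsD. Qed.

Lemma leq_l_mid_unmarkedE : l_mid (d_of D) (d_of E) <= #|E.1 :\: E.2|.
Proof. exact: leq_card_slices mid_comps_sub mid_comp_slice_neq0 mid_slices_unionsE. Qed.

Lemma unmarked_blocks_eq : l_mid (d_of D) (d_of E) = #|D.1 :\: D.2| ->
  l_mid (d_of D) (d_of E) = #|E.1 :\: E.2| -> D.1 :\: D.2 = E.1 :\: E.2.
Proof.
move=> lD lE.
rewrite -(slices_eq mid_comps_sub mid_comp_slice_neq0 mid_slices_unionsD) -?lD //.
by rewrite -(slices_eq mid_comps_sub mid_comp_slice_neq0 mid_slices_unionsE) -?lE.
Qed.

Lemma through_comps_sub : throughs \subset comps.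
Proof. by apply/subsetP => C; rewrite inE => /andP[]. Qed.

Lemma through_slice_neq0 C : C \in throughs -> slice row_mid C != set0.
Proof.
rewrite inE => /and3P[CC /set0Pn[v] + /set0Pn[u]]; rewrite !inE => vC uC.
apply/set0Pn; exists v; rewrite inE -(stack_comp_top_mid CC) //.
apply/negPn/negP => vnT.
have vP : (v, row_top) \in [pred z : W | (z.2 == 0 :> nat) && (pD z.1 \notin D.2)].
  by rewrite inE /= vnT.
by have := stack_comp_sub_closed top_unmarked_closed CC vC vP uC.
Qed.

Section SameUnmarked.
Hypothesis unmarkedDE : D.1 :\: D.2 = E.1 :\: E.2.

Lemma through_slice_unmarked C v (B : {set V k}) :
  C \in throughs -> v \in slice row_mid C -> v \in B -> B \notin D.1 :\: D.2.
Proof.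
case/setIdP => CC /andP[/set0Pn[u uC] _]; rewrite inE in uC; rewrite inE => vC vB.
apply/negP => BN; have /setDP[BE BnE] : B \in E.1 :\: E.2 by rewrite -unmarkedDE.
case/setDP: BN => BD BnD.
have vP : (v, row_mid) \in [pred z : W | (z.2 == 1 :> nat) && (z.1 \in B)] by rewrite inE /= vB.
by have := stack_comp_sub_closed (mid_block_closed BD BE BnD BnE) CC vC vP uC.
Qed.

Lemma through_slices_unionsD C v : C \in throughs -> v \in slice row_mid C ->
  exists2 B, B \in D.2 & (v \in B) && (B \subset slice row_mid C).
Proof.
move=> CT vC; have CC := subsetP through_comps_sub C CT.
exists (pD v); last by rewrite mem_pblock_marked // pblockD_sub_slice.
have := through_slice_unmarked CT vC (mem_pblock_marked markedD v).
by rewrite inE pblock_mem_marked // andbT negbK.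
Qed.

Lemma through_slices_unionsE C v : C \in throughs -> v \in slice row_mid C ->
  exists2 B, B \in E.2 & (v \in B) && (B \subset slice row_mid C).
Proof.
move=> CT vC; have CC := subsetP through_comps_sub C CT.
exists (pE v); last by rewrite mem_pblock_marked // pblockE_sub_slice.
have := through_slice_unmarked CT vC (mem_pblock_marked markedE v).
by rewrite unmarkedDE inE pblock_mem_marked // andbT negbK.
Qed.

Lemma leq_through_marked : #|throughs| <= #|D.2|.
Proof. exact: leq_card_slices through_comps_sub through_slice_neq0 through_slices_unionsD. Qed.

Lemma marked_blocks_eq : #|D.2| <= #|throughs| -> #|E.2| <= #|throughs| -> D.2 = E.2.
Proof.
move=> leD leE.
rewrite -(slices_eq through_comps_sub through_slice_neq0 through_slices_unionsD) //.
by rewrite -(slices_eq through_comps_sub through_slice_neq0 through_slices_unionsE).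
Qed.

End SameUnmarked.

Lemma marked_partition_eq :
  l_mid (d_of D) (d_of E) = #|D.1 :\: D.2| -> l_mid (d_of D) (d_of E) = #|E.1 :\: E.2| ->
  prop_num (diag_prod (d_of D) (d_of E)) = #|D.2| ->
  prop_num (diag_prod (d_of D) (d_of E)) = #|E.2| -> D = E.
Proof.
move=> lD lE; rewrite prop_num_through => tD tE.
have unmarkedDE := unmarked_blocks_eq lD lE.
have markedDE : D.2 = E.2 by apply: marked_blocks_eq; rewrite // -?tD -?tE.
have [_ subD] := andP markedD; have [_ subE] := andP markedE.
have blocksDE : D.1 = E.1.
  by rewrite -(setID D.1 D.2) -(setID E.1 E.2) (setIidPr subD) (setIidPr subE) unmarkedDE markedDE.
by rewrite [D]surjective_pairing [E]surjective_pairing blocksDE markedDE.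
Qed.

Lemma leq_unmarked_l_mid : D.1 :\: D.2 \subset E.1 :\: E.2 ->
  #|D.1 :\: D.2| <= l_mid (d_of D) (d_of E).
Proof.
move=> subN; apply: leq_trans (leq_imset_card (slice row_mid) mids).
apply/subset_leq_card/subsetP => B BN; have /setDP[BE BnE] := subsetP subN B BN.
have /setDP[BD BnD] := BN; have /set0Pn[b bB] := marked_block_neq0 markedD BD.
set C := stack_comp (d_of D) (d_of E) (b, row_mid).
have CC : C \in comps := stack_comp_in _ _ _.
have bC : (b, row_mid) \in C := mem_stack_comp _ _ _.
have bP : (b, row_mid) \in [pred z : W | (z.2 == 1 :> nat) && (z.1 \in B)] by rewrite inE /= bB.
have C_mid := stack_comp_sub_closed (mid_block_closed BD BE BnD BnE) CC bC bP.
apply/imsetP; exists C.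
  by rewrite inE CC; apply/forall_inP => w /C_mid; rewrite inE => /andP[].
apply/setP => w; rewrite inE; apply/idP/idP => [wB | /C_mid]; last by rewrite inE => /andP[].
have bS : b \in slice row_mid C by rewrite inE.
have := subsetP (pblockD_sub_slice CC bS) w.
by rewrite (def_pblock_marked markedD BD bB) inE => /(_ wB).
Qed.

Lemma leq_marked_through : D.2 \subset E.2 -> #|D.2| <= #|throughs|.
Proof.
move=> subT; apply: leq_trans (leq_imset_card (slice row_mid) throughs).
have [_ subD] := andP markedD; have [_ subE] := andP markedE.
apply/subset_leq_card/subsetP => B BT; have BTE := subsetP subT B BT.
have BD := subsetP subD B BT; have BE := subsetP subE B BTE.
have /set0Pn[b bB] := marked_block_neq0 markedD BD.
have pDb := def_pblock_marked markedD BD bB; have pEb := def_pblock_marked markedE BE bB.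
set C := stack_comp (d_of D) (d_of E) (b, row_top).
have CC : C \in comps := stack_comp_in _ _ _.
have bC : (b, row_top) \in C := mem_stack_comp _ _ _.
have bC1 : (b, row_mid) \in C by rewrite -stack_comp_top_mid ?pDb.
have bC2 : (b, row_bot) \in C by rewrite -stack_comp_mid_bot ?pEb.
have C_B := stack_comp_sub_closed (block_closed BD BE) CC bC bB.
apply/imsetP; exists C.
  by apply/setIdP; split=> //; apply/andP; split; apply/set0Pn; exists b; rewrite inE.
apply/setP => w; rewrite inE; apply/idP/idP => [wB | /C_B]; last by rewrite inE.
have bS : b \in slice row_mid C by rewrite inE.
by have := subsetP (pblockD_sub_slice CC bS) w; rewrite pDb inE => /(_ wB).
Qed.

End TwoMarkedPartitions.

Lemma l_mid_diag k (D : {set {set V k}} * {set {set V k}}) : marked_partition D ->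
  l_mid (d_of D) (d_of D) = #|D.1 :\: D.2|.
Proof. by move=> mD; apply/eqP; rewrite eqn_leq leq_l_mid_unmarkedD // leq_unmarked_l_mid. Qed.

Lemma prop_num_diag k (D : {set {set V k}} * {set {set V k}}) : marked_partition D ->
  prop_num (diag_prod (d_of D) (d_of D)) = #|D.2|.
Proof.
move=> mD; rewrite prop_num_through.
by apply/eqP; rewrite eqn_leq leq_through_marked // leq_marked_through.
Qed.

Lemma double_l_mid_lt k (D E : {set {set V k}} * {set {set V k}}) :
  marked_partition D -> marked_partition E -> D != E ->
  prop_num (diag_prod (d_of D) (d_of E)) = #|D.2| ->
  prop_num (diag_prod (d_of D) (d_of E)) = #|E.2| ->
  2 * l_mid (d_of D) (d_of E) < #|D.1 :\: D.2| + #|E.1 :\: E.2|.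
Proof.
move=> mD mE neqDE tD tE.
have lD := leq_l_mid_unmarkedD mD mE; have lE := leq_l_mid_unmarkedE mD mE.
rewrite mul2n -addnn ltn_neqAle leq_add // andbT; apply: contra neqDE => /eqP eq_sum.
by apply/eqP/(marked_partition_eq mD mE) => //; lia.
Qed.

Lemma ltn_sum_perm n (s : 'S_n) (l : 'I_n -> 'I_n -> nat) : s != 1%g ->
  (forall i, s i != i -> 2 * l i (s i) < l i i + l (s i) (s i)) ->
  \sum_i l i (s i) < \sum_i l i i.
Proof.
move=> s1 lt_l; rewrite -(ltn_pmul2l (isT : 0 < 2)) big_distrr /=.
have -> : 2 * \sum_i l i i = \sum_i (l i i + l (s i) (s i)).
  by rewrite big_split /= mul2n -addnn; congr (_ + _); apply: reindex_inj (@perm_inj _ s).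
have [i0 si0] : exists i0, s i0 != i0.
  apply/existsP; apply: contraR s1 => /existsPn fix_s; apply/eqP/permP => i.
  by rewrite perm1; apply/eqP/negPn/fix_s.
rewrite (bigD1 i0) //= [ltnRHS](bigD1 i0) //= -addSn leq_add ?lt_l //.
apply: leq_sum => i _; have [-> | /lt_l/ltnW //] := eqVneq (s i) i.
by rewrite mul2n addnn.
Qed.

Local Open Scope ring_scope.

(* Only the identity permutation reaches the degree of the product of the
   diagonal entries in the Leibniz expansion. *)
Lemma det_monomial_mx_monic (R : comNzRingType) n (a : 'I_n -> 'I_n -> bool)
    (l : 'I_n -> 'I_n -> nat) :
  (forall i, a i i) ->
  (forall i j, i != j -> a i j -> (2 * l i j < l i i + l j j)%N) ->
  \det (\matrix_(i, j) (if a i j then 'X^(l i j) else 0) : 'M[{poly R}]_n) \is monic.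
Proof.
move=> a_diag lt_l; set A := \matrix_(i, j) _; set N := (\sum_i l i i)%N.
have size_term (s : 'S_n) :
    s != 1%g -> (size (((-1) ^+ s * \prod_i A i (s i))%R : {poly R}) <= N)%N.
  move=> s1; rewrite size_Msign; have [a_s | ] := boolP [forall i, a i (s i)].
    rewrite (eq_bigr (fun i => 'X^(l i (s i)))) => [|i _]; last by rewrite mxE (forallP a_s).
    rewrite prodrXr size_polyXn; apply: ltn_sum_perm s1 _ => i si.
    by apply: lt_l (forallP a_s i); rewrite eq_sym.
  by rewrite negb_forall => /existsP[i /negbTE ai]; rewrite (bigD1 i) //= mxE ai mul0r size_poly0.
rewrite /determinant (bigD1 1%g) //= odd_perm1 expr0 mul1r.
rewrite (eq_bigr (fun i => 'X^(l i i))) => [|i _]; last by rewrite perm1 mxE a_diag.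
rewrite prodrXr -/N; apply/monicP; rewrite lead_coefDl ?lead_coefXn // size_polyXn ltnS.
apply: (big_ind (fun p : {poly R} => size p <= N)%N) => //; first by rewrite size_poly0.
by move=> p q sp sq; rewrite (leq_trans (size_polyD _ _)) // geq_max sp sq.
Qed.

Lemma Jset_marked k s1 s2 D : D \in Jset k s1 s2 -> marked_partition D.
Proof. by rewrite inE => /and5P[/andP[pi _] subT _ _ _]; rewrite /marked_partition pi subT. Qed.

Lemma card_Jset_marked k s1 s2 D : D \in Jset k s1 s2 -> #|D.2| = (2 * s1 + s2)%N.
Proof.
rewrite inE => /and5P[_ _ _ /eqP fixed /eqP moved].
rewrite -(cardsID [set B | gset B == B] D.2) -fixed -moved addnC.
by congr (_ + _)%N; apply: eq_card => B; rewrite !inE andbC.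
Qed.

(* The bounds on k, s1 and s2 are not needed: for an empty index set the
   determinant is that of the empty matrix, i.e. 1. *)
Theorem lemma3p9 (k s1 s2 : nat) :
  (1 <= k)%N -> (s1 + s2 <= k)%N ->
  \det (Gram k s1 s2) != 0 /\ lead_coef (\det (Gram k s1 s2)) = 1.
Proof.
move=> _ _; suff monic_det : \det (Gram k s1 s2) \is monic.
  by split; [exact: monic_neq0 | exact/monicP].
pose d i := d_of (enum_val (i : 'I_#|Jset k s1 s2|)).
have markedJ i := Jset_marked (enum_valP i); have cardJ i := card_Jset_marked (enum_valP i).
apply: (@det_monomial_mx_monic _ _
  (fun i j => prop_num (diag_prod (d i) (d j)) == (2 * s1 + s2)%N)
  (fun i j => l_mid (d i) (d j))) => [i | i j neq_ij /eqP prop_ij].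
  by rewrite /d prop_num_diag ?cardJ.
rewrite /d !l_mid_diag //; apply: double_l_mid_lt; rewrite ?cardJ //.
by apply: contra neq_ij => /eqP/enum_val_inj ->.
Qed.
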